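(* Let $G$ be a 2-connected graph and $G'$ a graph that is not a circuit, and let $f:G\rightarrow G'$ be a circuit surjection. Let $e$ be an edge of $G'$. If $C$ is a circuit of $G$ containing at least one element of $f^{-1}(e)$, then $C$ contains every element of $f^{-1}(e)$.
   Context: Graphs are undirected, without loops or multiple edges, and not necessarily finite. A circuit surjection $f:G\rightarrow G'$ is a map from the edge set $E(G)$ onto the edge set $E(G')$ such that for every circuit (cycle) $C$ of $G$, the edge set $f(C)$ is a circuit of $G'$; it is also required that $G'$ has no isolated vertices. ''$G'$ is not a circuit'' means $G'$ is not itself a single cycle. *)

From Stdlib Require Import Arith Lia.

Record graph := {
  V : Type;
  E : Type;
  ends : E -> V -> Prop;
  ends_two : forall e, exists u v, u <> v /\ forall w, ends e w <-> (w = u \/ w = v);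
  no_multi : forall e1 e2, (forall w, ends e1 w <-> ends e2 w) -> e1 = e2
}.

Arguments ends {g} _ _.

Definition adj (G : graph) (u v : V G) : Prop :=
  u <> v /\ exists e : E G, ends e u /\ ends e v.

Definition is_circuit (G : graph) (C : E G -> Prop) : Prop :=
  exists (n : nat) (v : nat -> V G) (e : nat -> E G),
    3 <= n /\
    (forall i j, i < n -> j < n -> v i = v j -> i = j) /\
    (forall i, i < n -> ends (e i) (v i) /\ ends (e i) (v ((i + 1) mod n))) /\
    (forall x, C x <-> exists i, i < n /\ e i = x).

Definition joined_avoiding (G : graph) (X : V G -> Prop) (u v : V G) : Prop :=
  exists (n : nat) (w : nat -> V G),
    w 0 = u /\ w n = v /\
    (forall i, i <= n -> ~ X (w i)) /\
    (forall i, i < n -> adj G (w i) (w (i + 1))).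

Definition connected_minus (G : graph) (X : V G -> Prop) : Prop :=
  forall u v, ~ X u -> ~ X v -> joined_avoiding G X u v.

(* 2-connected (Diestel): more than 2 vertices and G - X connected
   for every set X of fewer than 2 vertices. *)
Definition two_connected (G : graph) : Prop :=
  (exists a b c : V G, a <> b /\ a <> c /\ b <> c) /\
  connected_minus G (fun _ => False) /\
  (forall x : V G, connected_minus G (fun y => y = x)).

Definition image {A B : Type} (f : A -> B) (C : A -> Prop) : B -> Prop :=
  fun y => exists x, C x /\ f x = y.

Definition circuit_surjection (G G' : graph) (f : E G -> E G') : Prop :=
  (forall y : E G', exists x, f x = y) /\
  (forall C, is_circuit G C -> is_circuit G' (image f C)) /\
  (forall v : V G', exists e : E G', ends e v).

Definition graph_is_circuit (G : graph) : Prop :=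
  is_circuit G (fun _ => True).

(* Suppose C contains x but not y although f x = f y. The three circuits of a theta graph
   (three internally disjoint paths between two vertices) are each covered by the union of the
   other two, and so are their images, which are circuits of G'. For three circuits with this
   property, either all three coincide or each is the symmetric difference of the other two.

   Using 2-connectivity, attach to C an ear heading for y. If the ear passes through y, C and the
   ear form a theta graph whose three circuit images all contain f y, hence coincide with a single
   circuit Z of G'. Otherwise, replace C by the circuit made of the ear and the arc of C carrying x,
   which is closer to y, and repeat.

   Attaching an ear to a theta graph whose circuits are all mapped onto Z yields a theta graph
   through the ear with the same property, since the dichotomy applied to suitable triples of old
   and new circuits rules out the symmetric-difference alternative. As G is 2-connected, every
   edge is reached in this way, so f maps every edge into Z; f being onto, G' = Z is a circuit. *)

From Stdlib Require Import Arith Lia List Classical ClassicalEpsilon Setoid.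
Import ListNotations.

Definition same_set {T : Type} (A B : T -> Prop) := forall x, A x <-> B x.

Lemma same_set_refl {T : Type} (A : T -> Prop) : same_set A A.
Proof. intro x. reflexivity. Qed.

Definition symdiff {T : Type} (A B : T -> Prop) (x : T) := (A x /\ ~ B x) \/ (B x /\ ~ A x).

Definition disjoint {A : Type} (l1 l2 : list A) := forall x, In x l1 -> In x l2 -> False.

Section ListBookkeeping.
Context {A : Type}.
Implicit Types (a : A) (l : list A).

Lemma NoDup_app_iff l1 l2 : NoDup (l1 ++ l2) <-> NoDup l1 /\ NoDup l2 /\ disjoint l1 l2.
Proof.
  split.
  - intros H. split; [eapply NoDup_app_remove_r; eauto |].
    split; [eapply NoDup_app_remove_l; eauto |].
    induction l1 as [| a l1 IH]; simpl in *; [intros x [] |].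
    apply NoDup_cons_iff in H as [Ha H]. intros x [<- | Hx] Hx2.
    + apply Ha, in_app_iff. auto.
    + exact (IH H x Hx Hx2).
  - intros (H1 & H2 & H3). apply NoDup_app; auto.
Qed.

Lemma NoDup_rev_iff l : NoDup (rev l) <-> NoDup l.
Proof. split; intros H; [rewrite <- (rev_involutive l) |]; apply NoDup_rev; auto. Qed.

Lemma not_In_app a l1 l2 : ~ In a (l1 ++ l2) <-> ~ In a l1 /\ ~ In a l2.
Proof. rewrite in_app_iff. tauto. Qed.

Lemma not_In_cons a b l : ~ In a (b :: l) <-> b <> a /\ ~ In a l.
Proof. simpl. tauto. Qed.

Lemma not_In_rev a l : ~ In a (rev l) <-> ~ In a l.
Proof. rewrite <- in_rev. tauto. Qed.

Lemma disjoint_app_l l1 l2 l3 : disjoint (l1 ++ l2) l3 <-> disjoint l1 l3 /\ disjoint l2 l3.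
Proof. unfold disjoint. setoid_rewrite in_app_iff. firstorder. Qed.

Lemma disjoint_app_r l1 l2 l3 : disjoint l1 (l2 ++ l3) <-> disjoint l1 l2 /\ disjoint l1 l3.
Proof. unfold disjoint. setoid_rewrite in_app_iff. firstorder. Qed.

Lemma disjoint_cons_l a l1 l2 : disjoint (a :: l1) l2 <-> ~ In a l2 /\ disjoint l1 l2.
Proof. unfold disjoint. simpl. firstorder. subst. eauto. Qed.

Lemma disjoint_cons_r a l1 l2 : disjoint l1 (a :: l2) <-> ~ In a l1 /\ disjoint l1 l2.
Proof. unfold disjoint. simpl. firstorder. subst. eauto. Qed.

Lemma disjoint_rev_l l1 l2 : disjoint (rev l1) l2 <-> disjoint l1 l2.
Proof. unfold disjoint. setoid_rewrite <- in_rev. tauto. Qed.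

Lemma disjoint_rev_r l1 l2 : disjoint l1 (rev l2) <-> disjoint l1 l2.
Proof. unfold disjoint. setoid_rewrite <- in_rev. tauto. Qed.

Lemma disjoint_sym l1 l2 : disjoint l1 l2 -> disjoint l2 l1.
Proof. unfold disjoint. eauto. Qed.

Lemma app_neq_nil_comm l1 l2 : l1 ++ l2 <> [] -> l2 ++ l1 <> [].
Proof. destruct l1, l2; simpl; congruence. Qed.

Lemma last_default_irrel (x : A) l d d' : last (x :: l) d = last (x :: l) d'.
Proof. revert x. induction l as [| y l IH]; intros x; simpl; auto. destruct l; auto. apply (IH y). Qed.

Lemma last_app_cons l1 x l2 d : last (l1 ++ x :: l2) d = last (x :: l2) x.
Proof.
  induction l1 as [| a l1 IH]; simpl.
  - apply last_default_irrel.
  - destruct l1; simpl in *; destruct l2; auto; rewrite <- IH; auto.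
Qed.

Lemma last_In (x : A) l : In (last (x :: l) x) (x :: l).
Proof.
  revert x. induction l as [| y l IH]; intros x; simpl; auto.
  right. change (In (last (y :: l) x) (y :: l)). rewrite (last_default_irrel y l x y). apply IH.
Qed.

Lemma in_split_pair l (c h : A) : In c l -> In h l -> c <> h ->
  (exists X M Y, l = X ++ c :: M ++ h :: Y) \/ (exists X M Y, l = X ++ h :: M ++ c :: Y).
Proof.
  intros Hc Hh Hch. apply in_split in Hc as (l1 & l2 & ->).
  apply in_app_iff in Hh as [Hh | [Hh | Hh]].
  - right. apply in_split in Hh as (X & M & ->). exists X, M, l2. rewrite <- app_assoc. reflexivity.
  - congruence.
  - left. apply in_split in Hh as (M & Y & ->). exists l1, M, Y. reflexivity.
Qed.

End ListBookkeeping.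

Ltac nodup_solve :=
  repeat first
    [ rewrite NoDup_app_iff in * | rewrite NoDup_cons_iff in * | rewrite NoDup_rev_iff in *
    | rewrite not_In_app in * | rewrite not_In_cons in * | rewrite not_In_rev in *
    | rewrite disjoint_app_l in * | rewrite disjoint_app_r in * | rewrite disjoint_cons_l in *
    | rewrite disjoint_cons_r in * | rewrite disjoint_rev_l in * | rewrite disjoint_rev_r in * ];
  repeat match goal with H : _ /\ _ |- _ => destruct H end;
  repeat split;
  try solve [ assumption | apply disjoint_sym; assumption | apply not_eq_sym; assumption
            | apply NoDup_nil | intros [] | intros ? [] | intros ? ? [] ].

Section Edges.
Context {G : graph}.

Lemma ends_iff (s : E G) a b : a <> b -> ends s a -> ends s b ->
  forall w, ends s w <-> w = a \/ w = b.
Proof.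
  intros Hab Ha Hb w.
  destruct (ends_two G s) as (p & q & Hpq & Hs).
  rewrite Hs in Ha, Hb |- *.
  destruct Ha as [-> | ->]; destruct Hb as [-> | ->]; intuition congruence.
Qed.

Lemma edge_eq_of_ends (s t : E G) a b : a <> b ->
  ends s a -> ends s b -> ends t a -> ends t b -> s = t.
Proof.
  intros Hab Hsa Hsb Hta Htb. apply no_multi. intro w.
  rewrite (ends_iff s a b), (ends_iff t a b); tauto.
Qed.

Lemma other_end (s : E G) a : ends s a -> exists b, b <> a /\ ends s b.
Proof.
  intros Ha. destruct (ends_two G s) as (p & q & Hpq & Hs).
  destruct (proj1 (Hs a) Ha) as [-> | ->]; [exists q | exists p]; rewrite Hs; auto.
Qed.

Lemma adj_sym (a b : V G) : adj G a b -> adj G b a.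
Proof. intros [Hab (s & Ha & Hb)]. split; eauto. Qed.

End Edges.

Definition cyc_succ (n i : nat) := if i + 1 =? n then 0 else i + 1.

Definition cyc_pred (n i : nat) := if i =? 0 then n - 1 else i - 1.

Ltac cyc_lia :=
  unfold cyc_succ, cyc_pred in *;
  repeat match goal with
         | |- context [?a =? ?b] => destruct (Nat.eqb_spec a b)
         | H : context [?a =? ?b] |- _ => destruct (Nat.eqb_spec a b)
         end; lia.

Lemma mod_cyc_succ n i : i < n -> (i + 1) mod n = cyc_succ n i.
Proof.
  intros Hi. unfold cyc_succ. destruct (Nat.eqb_spec (i + 1) n) as [<- | Hne].
  - apply Nat.Div0.mod_same.
  - apply Nat.mod_small. lia.
Qed.

Section Circuits.
Context {G : graph}.

Definition circuit_rep (C : E G -> Prop) n (v : nat -> V G) (e : nat -> E G) :=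
  3 <= n /\ (forall i j, i < n -> j < n -> v i = v j -> i = j) /\
  (forall i, i < n -> forall w, ends (e i) w <-> w = v i \/ w = v (cyc_succ n i)) /\
  (forall x, C x <-> exists i, i < n /\ e i = x).

Lemma circuit_repP (C : E G -> Prop) : is_circuit G C -> exists n v e, circuit_rep C n v e.
Proof.
  intros (n & v & e & Hn & Hinj & He & HC). exists n, v, e.
  split; [auto | split; [auto | split; [| auto]]].
  intros i Hi. destruct (He i Hi) as [H1 H2]. rewrite mod_cyc_succ in H2 by lia.
  apply ends_iff; auto.
  intros Heq. apply Hinj in Heq; cyc_lia.
Qed.

Lemma is_circuit_same_set (C D : E G -> Prop) : is_circuit G C -> same_set C D -> is_circuit G D.
Proof.
  intros (n & v & e & H1 & H2 & H3 & H4) HCD. exists n, v, e.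
  do 3 (split; [auto |]). intro x. rewrite <- (HCD x). apply H4.
Qed.

Lemma circuit_inhabited (C : E G -> Prop) : is_circuit G C -> exists s, C s.
Proof. intros (n & v & e & Hn & _ & _ & HC). exists (e 0). apply HC. exists 0. split; [lia | auto]. Qed.

Lemma circuit_edges_at (C : E G -> Prop) w : is_circuit G C -> (exists s, C s /\ ends s w) ->
  exists s1 s2, s1 <> s2 /\ C s1 /\ C s2 /\ ends s1 w /\ ends s2 w /\
    forall t, C t -> ends t w -> t = s1 \/ t = s2.
Proof.
  intros HC (s & Cs & Hsw).
  destruct (circuit_repP C HC) as (n & v & e & Hn & Hinj & He & HCe).
  assert (Hk : exists k, k < n /\ w = v k).
  { destruct (proj1 (HCe s) Cs) as (i & Hi & <-). destruct (proj1 (He i Hi _) Hsw) as [-> | ->].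
    - exists i; auto.
    - exists (cyc_succ n i). split; [cyc_lia | auto]. }
  destruct Hk as (k & Hk & ->).
  assert (Hsucc : cyc_succ n (cyc_pred n k) = k) by cyc_lia.
  exists (e k), (e (cyc_pred n k)). repeat split.
  - intros Heq.
    assert (Hx : ends (e (cyc_pred n k)) (v (cyc_succ n k))) by (rewrite <- Heq; apply He; auto).
    apply He in Hx; [| cyc_lia]. rewrite Hsucc in Hx.
    destruct Hx as [Hx | Hx]; apply Hinj in Hx; cyc_lia.
  - apply HCe. eauto.
  - apply HCe. exists (cyc_pred n k). split; [cyc_lia | auto].
  - apply He; auto.
  - apply He; [cyc_lia | rewrite Hsucc; auto].
  - intros t Ct Htw. destruct (proj1 (HCe t) Ct) as (j & Hj & <-).
    destruct (proj1 (He j Hj _) Htw) as [Htw' | Htw']; apply Hinj in Htw'; try cyc_lia.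
    + left. congruence.
    + right. f_equal. cyc_lia.
Qed.

Lemma circuit_edge_at_cases (C : E G -> Prop) w s d t : is_circuit G C ->
  C s -> C d -> s <> d -> ends s w -> ends d w -> C t -> ends t w -> t = s \/ t = d.
Proof.
  intros HC Cs Cd Hsd Hsw Hdw Ct Htw.
  destruct (circuit_edges_at C w HC (ex_intro _ s (conj Cs Hsw)))
    as (s1 & s2 & H12 & _ & _ & _ & _ & Hall).
  pose proof (Hall s Cs Hsw). pose proof (Hall d Cd Hdw). pose proof (Hall t Ct Htw).
  intuition congruence.
Qed.

Lemma circuit_sub_of_closed (C X : E G -> Prop) : is_circuit G C -> (exists s, X s /\ C s) ->
  (forall w s t, X s -> C s -> ends s w -> C t -> ends t w -> X t) ->
  forall t, C t -> X t.
Proof.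
  intros HC (s & Xs & Cs) Hclosed.
  destruct (circuit_repP C HC) as (n & v & e & Hn & Hinj & He & HCe).
  assert (Hstep : forall j, j < n -> X (e j) -> X (e (cyc_succ n j))).
  { intros j Hj Xj. apply (Hclosed (v (cyc_succ n j)) (e j)); auto.
    - apply HCe; eauto.
    - apply He; auto.
    - apply HCe. exists (cyc_succ n j). split; [cyc_lia | auto].
    - apply He; [cyc_lia | auto]. }
  destruct (proj1 (HCe s) Cs) as (i & Hi & <-).
  assert (Hall : forall m, X (e ((i + m) mod n))).
  { induction m as [| m IH].
    - rewrite Nat.add_0_r, Nat.mod_small; auto.
    - assert (Hlt : (i + m) mod n < n) by (apply Nat.mod_upper_bound; lia).
      replace (i + S m) with (i + m + 1) by lia.
      rewrite <- Nat.Div0.add_mod_idemp_l, mod_cyc_succ by auto. auto. }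
  intros t Ct. destruct (proj1 (HCe t) Ct) as (j & Hj & <-).
  specialize (Hall (j + n - i)).
  replace (i + (j + n - i)) with (j + 1 * n) in Hall by lia.
  rewrite Nat.Div0.mod_add, Nat.mod_small in Hall; auto.
Qed.

Lemma circuit_minimal (C D : E G -> Prop) : is_circuit G C -> is_circuit G D ->
  (forall s, D s -> C s) -> forall s, C s -> D s.
Proof.
  intros HC HD HDC. apply circuit_sub_of_closed; auto.
  - destruct (circuit_inhabited D HD) as [s Ds]. eauto.
  - intros w s t Ds Cs Hsw Ct Htw.
    destruct (circuit_edges_at D w HD (ex_intro _ s (conj Ds Hsw)))
      as (s1 & s2 & H12 & D1 & D2 & E1 & E2 & _).
    destruct (circuit_edge_at_cases C w s1 s2 t HC (HDC _ D1) (HDC _ D2) H12 E1 E2 Ct Htw)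
      as [-> | ->]; auto.
Qed.

Lemma circuit_symdiff_closed (Z W1 W2 : E G -> Prop) w s t :
  is_circuit G Z -> is_circuit G W1 -> is_circuit G W2 ->
  (forall x, symdiff Z W1 x -> W2 x) ->
  Z s -> ~ W1 s -> ends s w -> W2 t -> ends t w -> symdiff Z W1 t.
Proof.
  intros HZ HW1 HW2 Hsub Zs W1s Hsw W2t Htw.
  assert (Xs : symdiff Z W1 s) by (left; auto).
  destruct (circuit_edges_at Z w HZ (ex_intro _ s (conj Zs Hsw)))
    as (s1 & s2 & H12 & Z1 & Z2 & E1 & E2 & Hall).
  assert (Hb : exists b, b <> s /\ Z b /\ ends b w)
    by (destruct (Hall s Zs Hsw) as [-> | ->]; eauto).
  destruct Hb as (b & Hbs & Zb & Hbw).
  (* Besides s, Z - W1 contains b, or else W1 - Z contains the other edge d of W1 at w;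
     W2 contains these two edges at w and hence no other one. *)
  destruct (classic (W1 b)) as [W1b | W1b].
  - destruct (circuit_edges_at W1 w HW1 (ex_intro _ b (conj W1b Hbw)))
      as (d1 & d2 & Hd12 & Wd1 & Wd2 & F1 & F2 & Hall2).
    assert (Hd : exists d, d <> b /\ W1 d /\ ends d w)
      by (destruct (Hall2 b W1b Hbw) as [-> | ->]; eauto).
    destruct Hd as (d & Hdb & W1d & Hdw).
    assert (Hds : d <> s) by congruence.
    assert (Zd : ~ Z d).
    { intros Zd. destruct (circuit_edge_at_cases Z w s b d HZ Zs Zb (not_eq_sym Hbs) Hsw Hbw Zd Hdw);
        congruence. }
    assert (Xd : symdiff Z W1 d) by (right; auto).
    destruct (circuit_edge_at_cases W2 w s d t HW2 (Hsub _ Xs) (Hsub _ Xd) (not_eq_sym Hds)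
      Hsw Hdw W2t Htw) as [-> | ->]; auto.
  - assert (Xb : symdiff Z W1 b) by (left; auto).
    destruct (circuit_edge_at_cases W2 w s b t HW2 (Hsub _ Xs) (Hsub _ Xb) (not_eq_sym Hbs)
      Hsw Hbw W2t Htw) as [-> | ->]; auto.
Qed.

Lemma circuit_symdiff (Z W1 W2 : E G -> Prop) : is_circuit G Z -> is_circuit G W1 -> is_circuit G W2 ->
  (exists a, Z a /\ ~ W1 a) -> (forall x, symdiff Z W1 x -> W2 x) ->
  forall x, W2 x -> symdiff Z W1 x.
Proof.
  intros HZ HW1 HW2 (a & Za & W1a) Hsub.
  apply circuit_sub_of_closed; auto.
  - exists a. split; [left | apply Hsub; left]; auto.
  - intros w s t [[Zs W1s] | [W1s Zs]] W2s Hsw W2t Htw.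
    + eapply circuit_symdiff_closed; eauto.
    + assert (Hsub' : forall x, symdiff W1 Z x -> W2 x)
        by (intros; apply Hsub; unfold symdiff in *; tauto).
      pose proof (circuit_symdiff_closed W1 Z W2 w s t HW1 HZ HW2 Hsub' W1s Zs Hsw W2t Htw).
      unfold symdiff in *; tauto.
Qed.

End Circuits.

Section ThetaTriples.
Context {G : graph}.

Definition theta_triple (Z W1 W2 : E G -> Prop) :=
  (forall x, Z x -> W1 x \/ W2 x) /\ (forall x, W1 x -> Z x \/ W2 x) /\
  (forall x, W2 x -> Z x \/ W1 x).

Lemma theta_triple_same_set (Z W1 W2 Z' W1' W2' : E G -> Prop) :
  same_set Z Z' -> same_set W1 W1' -> same_set W2 W2' -> theta_triple Z W1 W2 -> theta_triple Z' W1' W2'.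
Proof.
  unfold theta_triple, same_set. intros HZ H1 H2 (T1 & T2 & T3).
  split; [| split]; intros x; rewrite <- ?HZ, <- ?H1, <- ?H2; auto.
Qed.

Lemma theta_triple_same (Z W1 W2 : E G -> Prop) :
  is_circuit G Z -> is_circuit G W2 -> theta_triple Z W1 W2 -> same_set Z W1 -> same_set Z W2.
Proof.
  intros HZ HW2 (_ & _ & H2) HZW1.
  assert (Hsub : forall x, W2 x -> Z x)
    by (intros x W2x; destruct (H2 x W2x); [| apply HZW1]; auto).
  intro x. split; [apply circuit_minimal |]; auto.
Qed.

Lemma theta_triple_symdiff (Z W1 W2 : E G -> Prop) :
  is_circuit G Z -> is_circuit G W1 -> is_circuit G W2 -> theta_triple Z W1 W2 ->
  ~ same_set Z W1 -> same_set W2 (symdiff Z W1).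
Proof.
  intros HZ HW1 HW2 (H0 & H1 & _) Hne.
  assert (Ha : exists a, Z a /\ ~ W1 a).
  { apply NNPP. intros Hn. apply Hne. intro x. split.
    - intros Zx. apply NNPP. eauto.
    - apply circuit_minimal; auto. intros y Zy. apply NNPP. eauto. }
  assert (Hsub : forall x, symdiff Z W1 x -> W2 x).
  { intros x [[A B] | [A B]]; [destruct (H0 x A) | destruct (H1 x A)]; tauto. }
  intro x. split; [apply circuit_symdiff |]; auto.
Qed.

Lemma theta_triple_common (Z W1 W2 : E G -> Prop) x :
  is_circuit G Z -> is_circuit G W1 -> is_circuit G W2 -> theta_triple Z W1 W2 -> Z x -> W1 x -> W2 x ->
  same_set Z W1 /\ same_set Z W2.
Proof.
  intros HZ HW1 HW2 Ht Zx W1x W2x.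
  destruct (classic (same_set Z W1)) as [Heq | Hne].
  - split; auto. apply (theta_triple_same Z W1 W2); auto.
  - apply (theta_triple_symdiff Z W1 W2 HZ HW1 HW2 Ht Hne) in W2x. unfold symdiff in W2x. tauto.
Qed.

Lemma theta_triple_propagate (Z O1 O2 O3 K1 K2 K3 : E G -> Prop) :
  is_circuit G O1 -> is_circuit G O2 -> is_circuit G O3 ->
  is_circuit G K1 -> is_circuit G K2 -> is_circuit G K3 ->
  same_set O1 Z -> same_set O2 Z -> same_set O3 Z ->
  theta_triple O1 K1 K2 -> theta_triple O2 K1 K3 -> theta_triple O3 K2 K3 ->
  same_set K1 Z /\ same_set K2 Z /\ same_set K3 Z.
Proof.
  intros HO1 HO2 HO3 HK1 HK2 HK3 E1 E2 E3 T1 T2 T3.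
  destruct (classic (same_set O1 K1)) as [Heq | Hne].
  - pose proof (theta_triple_same _ _ _ HO1 HK2 T1 Heq) as F2.
    assert (Heq2 : same_set O2 K1) by (intro x; rewrite (E2 x), <- (E1 x); apply Heq).
    pose proof (theta_triple_same _ _ _ HO2 HK3 T2 Heq2) as F3.
    split; [| split]; intro x;
      specialize (Heq x); specialize (E1 x); specialize (E2 x); specialize (F2 x);
      specialize (F3 x); tauto.
  - (* Otherwise K2 = O1 Δ K1 = O2 Δ K1 = K3, so O3 lies in K2 and equals it by minimality,
       which is absurd since O3 = O1 while K2 = O1 Δ K1 with K1 nonempty. *)
    exfalso.
    pose proof (theta_triple_symdiff _ _ _ HO1 HK1 HK2 T1 Hne) as F2.
    assert (Hne2 : ~ same_set O2 K1)
      by (intros H; apply Hne; intro x; rewrite (E1 x), <- (E2 x); apply H).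
    pose proof (theta_triple_symdiff _ _ _ HO2 HK1 HK3 T2 Hne2) as F3.
    assert (F23 : same_set K2 K3).
    { intro x. rewrite (F2 x), (F3 x). unfold symdiff. rewrite (E1 x), (E2 x). tauto. }
    destruct T3 as (T31 & _ & _).
    assert (Hsub : forall x, O3 x -> K2 x)
      by (intros x Hx; destruct (T31 x Hx); [| apply (F23 x)]; auto).
    pose proof (circuit_minimal K2 O3 HK2 HO3 Hsub) as Hback.
    destruct (circuit_inhabited K1 HK1) as [s K1s].
    destruct (classic (O1 s)) as [O1s | O1s].
    + assert (K2s : K2 s) by (apply Hsub, (E3 s), (E1 s); auto).
      apply F2 in K2s. unfold symdiff in K2s. tauto.
    + apply O1s, (E1 s), (E3 s), Hback, (F2 s). right. auto.
Qed.

End ThetaTriples.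

Section Walks.
Context {G : graph}.

Fixpoint walk (l : list (V G)) : Prop :=
  match l with
  | a :: ((b :: _) as t) => adj G a b /\ walk t
  | _ => True
  end.

Fixpoint walk_edge (l : list (V G)) (s : E G) : Prop :=
  match l with
  | a :: ((b :: _) as t) => (ends s a /\ ends s b) \/ walk_edge t s
  | _ => False
  end.

Lemma walk_app l1 x l2 : walk (l1 ++ x :: l2) <-> walk (l1 ++ [x]) /\ walk (x :: l2).
Proof.
  induction l1 as [| a l1 IH]; simpl; [tauto |].
  destruct l1 as [| b l1]; simpl in *; [tauto |]. rewrite IH. tauto.
Qed.

Lemma walk_edge_app l1 x l2 s :
  walk_edge (l1 ++ x :: l2) s <-> walk_edge (l1 ++ [x]) s \/ walk_edge (x :: l2) s.
Proof.
  induction l1 as [| a l1 IH]; simpl; [tauto |].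
  destruct l1 as [| b l1]; simpl in *; [tauto |]. rewrite IH. tauto.
Qed.

Lemma walk_rev l : walk l -> walk (rev l).
Proof.
  induction l as [| a l IH]; simpl; auto.
  destruct l as [| b l]; simpl; auto.
  intros [Hab Hw]. specialize (IH Hw). simpl in IH.
  rewrite <- app_assoc. apply walk_app. split; auto.
  simpl. split; auto. apply adj_sym; auto.
Qed.

Lemma walk_edge_rev l s : walk_edge (rev l) s <-> walk_edge l s.
Proof.
  induction l as [| a l IH]; simpl; [tauto |].
  destruct l as [| b l]; simpl; [tauto |].
  simpl in IH. rewrite <- app_assoc. simpl. rewrite walk_edge_app, IH. simpl. tauto.
Qed.

Lemma rev_path (a b : V G) X : rev (a :: X ++ [b]) = b :: rev X ++ [a].
Proof. simpl. rewrite rev_app_distr. reflexivity. Qed.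

Lemma walk_reverse a X b : walk (a :: X ++ [b]) -> walk (b :: rev X ++ [a]).
Proof. rewrite <- rev_path. apply walk_rev. Qed.

Lemma walk_edge_reverse a X b s : walk_edge (b :: rev X ++ [a]) s <-> walk_edge (a :: X ++ [b]) s.
Proof. rewrite <- rev_path. apply walk_edge_rev. Qed.

Lemma walk_join_iff a X b Y c :
  walk (a :: (X ++ b :: Y) ++ [c]) <-> walk (a :: X ++ [b]) /\ walk (b :: Y ++ [c]).
Proof.
  rewrite <- app_assoc.
  change (a :: X ++ (b :: Y) ++ [c]) with ((a :: X) ++ b :: (Y ++ [c])).
  rewrite (walk_app (a :: X)). reflexivity.
Qed.

Lemma walk_edge_join a X b Y c s :
  walk_edge (a :: (X ++ b :: Y) ++ [c]) s <-> walk_edge (a :: X ++ [b]) s \/ walk_edge (b :: Y ++ [c]) s.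
Proof.
  rewrite <- app_assoc.
  change (a :: X ++ (b :: Y) ++ [c]) with ((a :: X) ++ b :: (Y ++ [c])).
  rewrite (walk_edge_app (a :: X)). reflexivity.
Qed.

Lemma walk_split3 X c M h Y : walk (X ++ c :: M ++ h :: Y) ->
  walk (X ++ [c]) /\ walk (c :: M ++ [h]) /\ walk (h :: Y).
Proof.
  rewrite (walk_app X c (M ++ h :: Y)). intros [HX HMY].
  change (c :: M ++ h :: Y) with ((c :: M) ++ h :: Y) in HMY.
  apply walk_app in HMY. tauto.
Qed.

Lemma walk_edge_split3 X c M h Y s : walk_edge (X ++ c :: M ++ h :: Y) s <->
  walk_edge (X ++ [c]) s \/ walk_edge (c :: M ++ [h]) s \/ walk_edge (h :: Y) s.
Proof.
  rewrite (walk_edge_app X c (M ++ h :: Y)).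
  change (c :: M ++ h :: Y) with ((c :: M) ++ h :: Y). rewrite (walk_edge_app (c :: M)). reflexivity.
Qed.

Lemma walk_reroute u v I S X c M h Y :
  u :: I ++ [v] = X ++ c :: M ++ h :: Y -> walk (u :: I ++ [v]) -> walk (u :: S ++ [v]) ->
  walk (c :: (rev X ++ S ++ rev Y) ++ [h]) /\
  same_set (walk_edge (c :: (rev X ++ S ++ rev Y) ++ [h]))
    (fun s => walk_edge (X ++ [c]) s \/ walk_edge (u :: S ++ [v]) s \/ walk_edge (h :: Y) s).
Proof.
  intros HP Hw HwS.
  assert (HX : exists X1, X ++ [c] = u :: X1).
  { destruct X as [| x X]; injection HP as -> _; [exists [] | exists (X ++ [c])]; reflexivity. }
  assert (HY : exists Y1, h :: Y = Y1 ++ [v]).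
  { assert (Hlast : last (h :: Y) h = v).
    { rewrite <- (last_app_cons (X ++ c :: M) h Y h), <- app_assoc. simpl.
      rewrite <- HP. apply (last_last (u :: I)). }
    exists (removelast (h :: Y)). rewrite <- Hlast. apply app_removelast_last. discriminate. }
  destruct HX as (X1 & HX), HY as (Y1 & HY).
  assert (Hnew : c :: (rev X ++ S ++ rev Y) ++ [h] = rev X1 ++ u :: S ++ v :: rev Y1).
  { transitivity (rev (u :: X1) ++ S ++ rev (Y1 ++ [v])).
    - rewrite <- HX, <- HY, !rev_app_distr, <- !app_assoc. reflexivity.
    - rewrite rev_unit. simpl. rewrite <- app_assoc. reflexivity. }
  rewrite HP in Hw. apply walk_split3 in Hw as (HwX & _ & HwY).
  rewrite HX in HwX. rewrite HY in HwY.
  rewrite Hnew. split.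
  - rewrite (walk_app (rev X1)).
    change (u :: S ++ v :: rev Y1) with ((u :: S) ++ v :: rev Y1).
    rewrite (walk_app (u :: S)), <- rev_unit.
    split; [| split]; [apply (walk_rev (u :: X1)) | | apply walk_rev]; auto.
  - intro s. rewrite (walk_edge_app (rev X1)).
    change (u :: S ++ v :: rev Y1) with ((u :: S) ++ v :: rev Y1).
    rewrite (walk_edge_app (u :: S)), <- rev_unit.
    change (rev X1 ++ [u]) with (rev (u :: X1)).
    rewrite !walk_edge_rev, HX, HY. reflexivity.
Qed.

Lemma walk_nth l d i : walk l -> i + 1 < length l -> adj G (nth i l d) (nth (i + 1) l d).
Proof.
  revert i. induction l as [| a l IH]; intros i Hw Hi; simpl in *; [lia |].
  destruct l as [| b l]; simpl in *; [lia |].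
  destruct Hw as [Hab Hw]. destruct i as [| i]; simpl; auto.
  apply (IH i Hw). simpl. lia.
Qed.

Lemma nth_walk l d : (forall i, i + 1 < length l -> adj G (nth i l d) (nth (i + 1) l d)) -> walk l.
Proof.
  induction l as [| a l IH]; intros H; simpl; auto.
  destruct l as [| b l]; auto. split.
  - apply (H 0). simpl. lia.
  - apply IH. intros i Hi. apply (H (S i)). simpl in *. lia.
Qed.

Lemma walk_edge_nth l d s : walk_edge l s <->
  exists i, i + 1 < length l /\ ends s (nth i l d) /\ ends s (nth (i + 1) l d).
Proof.
  induction l as [| a l IH]; simpl.
  - split; [tauto |]. intros (i & Hi & _). lia.
  - destruct l as [| b l].
    + split; [tauto |]. intros (i & Hi & _). simpl in Hi. lia.
    + rewrite IH. split.
      * intros [Hab | (i & Hi & H)].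
        -- exists 0. simpl. split; [lia | auto].
        -- exists (S i). simpl in *. split; [lia | auto].
      * intros ([| i] & Hi & H); [left | right; exists i]; simpl in *; [auto | split; [lia | auto]].
Qed.

Lemma walk_edge_ends_in l s w : walk l -> walk_edge l s -> ends s w -> In w l.
Proof.
  induction l as [| a l IH]; simpl; [tauto |].
  destruct l as [| b l]; [tauto |].
  intros [[Hab _] Hw] [[Ha Hb] | H] Hsw.
  - rewrite (ends_iff s a b Hab Ha Hb) in Hsw. destruct Hsw as [-> | ->]; simpl; auto.
  - right. auto.
Qed.

Lemma walk_edge_interior c J h s : J <> [] -> walk_edge (c :: J ++ [h]) s ->
  exists w, In w J /\ ends s w.
Proof.
  revert c. induction J as [| w J IH]; intros c Hne H; [congruence |].
  destruct H as [[H1 H2] | H]; [exists w; simpl; auto |].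
  destruct J as [| w' J].
  - destruct H as [[H1 H2] | []]. exists w. simpl. auto.
  - destruct (IH w ltac:(congruence) H) as (x & Hx & Hs). exists x. simpl. auto.
Qed.

Definition cycle a t := NoDup (a :: t) /\ 2 <= length t /\ walk (a :: t ++ [a]).

Lemma cycle_circuit a t : cycle a t -> is_circuit G (walk_edge (a :: t ++ [a])).
Proof.
  intros (Hnd & Hlen & Hw).
  set (L := a :: t ++ [a]). set (n := length (a :: t)).
  assert (HL : length L = n + 1) by (unfold L, n; simpl; rewrite length_app; simpl; lia).
  assert (HnL : forall i, i < n -> nth i L a = nth i (a :: t) a)
    by (intros i Hi; apply (app_nth1 (a :: t) [a]); auto).
  assert (HnLn : nth n L a = a)
    by (unfold n; apply (nth_middle (a :: t) [] a a)).
  assert (Hadj : forall i, i < n -> adj G (nth i L a) (nth (i + 1) L a))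
    by (intros i Hi; apply walk_nth; auto; lia).
  destruct (Hadj 0 ltac:(unfold n; simpl; lia)) as (_ & s0 & _).
  set (e := fun i => epsilon (inhabits s0) (fun s => ends s (nth i L a) /\ ends s (nth (i + 1) L a))).
  assert (He : forall i, i < n -> ends (e i) (nth i L a) /\ ends (e i) (nth (i + 1) L a))
    by (intros i Hi; apply epsilon_spec, Hadj; auto).
  assert (Hsucc : forall i, i < n -> nth ((i + 1) mod n) L a = nth (i + 1) L a).
  { intros i Hi. rewrite mod_cyc_succ by auto. unfold cyc_succ.
    destruct (Nat.eqb_spec (i + 1) n) as [-> | _]; auto. }
  exists n, (fun i => nth i L a), e. split; [unfold n; simpl; lia | split; [| split]].
  - intros i j Hi Hj Heq. rewrite (HnL i Hi), (HnL j Hj) in Heq.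
    eapply (proj1 (NoDup_nth (a :: t) a)); eauto.
  - intros i Hi. rewrite Hsucc by auto. auto.
  - intros x. rewrite (walk_edge_nth L a x). split.
    + intros (i & Hi & H1 & H2). exists i. split; [lia |].
      destruct (He i ltac:(lia)) as [H3 H4]. destruct (Hadj i ltac:(lia)) as [Hne _].
      eapply edge_eq_of_ends; eauto.
    + intros (i & Hi & <-). exists i. split; [lia | apply He; auto].
Qed.

Lemma circuit_cycle (C : E G -> Prop) : is_circuit G C ->
  exists a t, cycle a t /\ same_set C (walk_edge (a :: t ++ [a])).
Proof.
  intros HC. destruct (circuit_repP C HC) as (n & v & e & Hn & Hinj & He & HCe).
  exists (v 0), (map v (seq 1 (n - 1))).
  assert (Hseq : v 0 :: map v (seq 1 (n - 1)) = map v (seq 0 n)).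
  { destruct n as [| n]; [lia |]. simpl. rewrite Nat.sub_0_r. reflexivity. }
  set (L := v 0 :: map v (seq 1 (n - 1)) ++ [v 0]).
  assert (HL : L = map v (seq 0 n) ++ [v 0]) by (unfold L; rewrite <- Hseq; reflexivity).
  assert (HlenL : length L = n + 1) by (rewrite HL, length_app, length_map, length_seq; simpl; lia).
  assert (Hnth : forall i, i < n -> nth i L (v 0) = v i).
  { intros i Hi. rewrite HL, app_nth1 by (rewrite length_map, length_seq; auto).
    rewrite map_nth, seq_nth; auto. }
  assert (Hnth_succ : forall i, i < n -> nth (i + 1) L (v 0) = v (cyc_succ n i)).
  { intros i Hi. unfold cyc_succ. destruct (Nat.eqb_spec (i + 1) n) as [-> | Hlast].
    - rewrite HL, app_nth2 by (rewrite length_map, length_seq; auto).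
      rewrite length_map, length_seq, Nat.sub_diag. reflexivity.
    - apply Hnth. lia. }
  assert (Hne : forall i, i < n -> v i <> v (cyc_succ n i))
    by (intros i Hi Heq; apply Hinj in Heq; cyc_lia).
  split; [split; [| split] |].
  - rewrite Hseq. apply (NoDup_nth _ (v 0)). rewrite length_map, length_seq.
    intros i j Hi Hj. rewrite !map_nth, !seq_nth by auto. apply Hinj; auto.
  - rewrite length_map, length_seq. lia.
  - fold L. apply (nth_walk _ (v 0)). intros i Hi. rewrite HlenL in Hi.
    rewrite Hnth, Hnth_succ by lia. split; [apply Hne; lia |].
    exists (e i). split; apply He; auto; lia.
  - intro s. fold L. rewrite HCe, (walk_edge_nth L (v 0)). split.
    + intros (i & Hi & <-). exists i. rewrite HlenL, Hnth, Hnth_succ by auto.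
      split; [lia | split; apply He; auto].
    + intros (i & Hi & H1 & H2). rewrite HlenL in Hi. rewrite Hnth, Hnth_succ in * by lia.
      exists i. split; [lia |].
      apply (edge_eq_of_ends _ _ (v i) (v (cyc_succ n i)));
        [apply Hne; lia | apply He .. | |]; auto; lia.
Qed.

Lemma cycle_edge_ends a t s x : cycle a t -> walk_edge (a :: t ++ [a]) s -> ends s x -> In x (a :: t).
Proof.
  intros (_ & _ & Hw) Hs Hx. pose proof (walk_edge_ends_in _ s x Hw Hs Hx) as Hin.
  simpl in Hin |- *. rewrite in_app_iff in Hin. simpl in Hin. tauto.
Qed.

Lemma cycle_other_vertex a t c : cycle a t -> exists d, In d (a :: t) /\ d <> c.
Proof.
  intros (Hnd & Hlen & _). destruct t as [| a1 t]; [simpl in Hlen; lia |].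
  apply NoDup_cons_iff in Hnd as [Ha _].
  destruct (classic (a = c)) as [<- | Hc].
  - exists a1. split; [simpl; auto |]. intros ->. apply Ha. simpl. auto.
  - exists a. simpl. auto.
Qed.

Lemma cycle_rotate a t c : cycle a t -> In c (a :: t) ->
  exists t', cycle c t' /\ same_set (walk_edge (a :: t ++ [a])) (walk_edge (c :: t' ++ [c])) /\
    (forall x, In x (a :: t) <-> In x (c :: t')).
Proof.
  intros (Hnd & Hlen & Hw) Hc. apply in_split in Hc as ([| a' al] & be & Hab).
  - injection Hab as -> ->. exists be. repeat split; auto; tauto.
  - injection Hab as <- ->. exists (be ++ a :: al).
    assert (L1 : a :: (al ++ c :: be) ++ [a] = (a :: al) ++ c :: (be ++ [a]))
      by (simpl; rewrite <- app_assoc; reflexivity).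
    assert (L2 : c :: (be ++ a :: al) ++ [c] = (c :: be) ++ a :: (al ++ [c]))
      by (simpl; rewrite <- app_assoc; reflexivity).
    split; [split; [| split] | split].
    + clear - Hnd. nodup_solve.
    + rewrite !length_app in *. simpl in *. lia.
    + rewrite L1, walk_app in Hw. rewrite L2, walk_app. tauto.
    + intro s. rewrite L1, L2, (walk_edge_app (a :: al)), (walk_edge_app (c :: be)). tauto.
    + intro x. simpl. rewrite !in_app_iff. simpl. tauto.
Qed.

Lemma walk_of_fun (w : nat -> V G) k n :
  (forall i, k <= i < k + n -> adj G (w i) (w (i + 1))) ->
  walk (map w (seq k (S n))) /\ last (map w (seq k (S n))) (w k) = w (k + n) /\
  (forall x, In x (map w (seq k (S n))) -> exists i, k <= i <= k + n /\ x = w i).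
Proof.
  revert k. induction n as [| n IH]; intros k Hadj.
  - simpl. rewrite Nat.add_0_r. split; [auto | split; [auto |]].
    intros x [<- | []]. exists k. split; [lia | auto].
  - destruct (IH (S k)) as (H1 & H2 & H3); [intros i Hi; apply Hadj; lia |].
    change (map w (seq k (S (S n)))) with (w k :: map w (seq (S k) (S n))).
    change (map w (seq (S k) (S n))) with (w (S k) :: map w (seq (S (S k)) n)) in *.
    split; [| split].
    + split; auto. replace (S k) with (k + 1) by lia. apply Hadj. lia.
    + change (last (w k :: w (S k) :: map w (seq (S (S k)) n)) (w k)) with
        (last (w (S k) :: map w (seq (S (S k)) n)) (w k)).
      rewrite (last_default_irrel _ _ _ (w (S k))), H2. f_equal. lia.
    + intros x [<- | Hx].
      * exists k. split; [lia | auto].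
      * destruct (H3 x Hx) as (i & Hi & ->). exists i. split; [lia | auto].
Qed.

Lemma joined_avoiding_walk X u v : joined_avoiding G X u v ->
  exists l, walk (u :: l) /\ last (u :: l) u = v /\ forall x, In x (u :: l) -> ~ X x.
Proof.
  intros (n & w & H0 & Hn & Hav & Hadj).
  destruct (walk_of_fun w 0 n) as (H1 & H2 & H3); [intros i Hi; apply Hadj; lia |].
  exists (map w (seq 1 n)).
  assert (Heq : u :: map w (seq 1 n) = map w (seq 0 (S n))) by (simpl; rewrite H0; auto).
  rewrite Heq. split; [auto | split].
  - rewrite <- H0, H2. auto.
  - intros x Hx. destruct (H3 x Hx) as (i & Hi & ->). apply Hav. lia.
Qed.

Lemma walk_simplify l b : walk (b :: l) -> exists l', walk (b :: l') /\ NoDup (b :: l') /\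
  last (b :: l') b = last (b :: l) b /\ forall x, In x (b :: l') -> In x (b :: l).
Proof.
  revert b. induction l as [| b' l IH]; intros b Hw.
  - exists []. split; [auto | split; [repeat constructor; simpl; auto | split; auto]].
  - destruct Hw as [Hbb Hw].
    destruct (IH b' Hw) as (p & Hwp & Hnd & Hl & Hin).
    assert (Hlast : last (b :: b' :: l) b = last (b' :: l) b')
      by (simpl; destruct l; auto; apply last_default_irrel).
    destruct (classic (In b (b' :: p))) as [Hb | Hb].
    + apply in_split in Hb. destruct Hb as (p1 & p2 & Hp).
      exists p2. rewrite Hp in Hwp, Hnd, Hin, Hl. split; [| split; [| split]].
      * apply walk_app in Hwp. tauto.
      * apply NoDup_app_remove_l in Hnd. auto.
      * rewrite Hlast, <- Hl, last_app_cons. auto.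
      * intros x Hx. assert (Hx' : In x (p1 ++ b :: p2)) by (apply in_app_iff; right; auto).
        apply Hin in Hx'. simpl in *. tauto.
    + exists (b' :: p). split; [| split; [| split]].
      * split; auto.
      * constructor; auto.
      * rewrite Hlast, <- Hl. apply (last_default_irrel b').
      * intros x [<- | Hx]; simpl; auto. apply Hin in Hx. simpl in *. tauto.
Qed.

Lemma walk_first_in (S : list (V G)) l : (exists x, In x l /\ In x S) ->
  exists p1 h p2, l = p1 ++ h :: p2 /\ In h S /\ forall x, In x p1 -> ~ In x S.
Proof.
  induction l as [| a l IH]; intros (x & Hx & HxS); [destruct Hx |].
  destruct (classic (In a S)) as [Ha | Ha].
  - exists [], a, l. simpl. auto.
  - destruct Hx as [<- | Hx]; [tauto |].
    destruct IH as (p1 & h & p2 & -> & Hh & Hp); [eauto |].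
    exists (a :: p1), h, p2. split; [auto | split; [auto |]].
    intros y [<- | Hy]; auto.
Qed.

Lemma walk_exit (S : list (V G)) l b : walk (b :: l) -> In b S -> ~ In (last (b :: l) b) S ->
  exists c w l2, In c S /\ ~ In w S /\ adj G c w /\ walk (w :: l2) /\
    last (w :: l2) w = last (b :: l) b /\ length l2 < length l.
Proof.
  revert b. induction l as [| b' l IH]; intros b Hw Hb Hl; [simpl in Hl; tauto |].
  destruct Hw as [Hbb Hw].
  assert (Hlast : last (b :: b' :: l) b = last (b' :: l) b')
    by (simpl; destruct l; auto; apply last_default_irrel).
  rewrite Hlast in *.
  destruct (classic (In b' S)) as [Hb' | Hb'].
  - destruct (IH b' Hw Hb' Hl) as (c & w & l2 & H1 & H2 & H3 & H4 & H5 & H6).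
    exists c, w, l2. do 5 (split; [auto |]). simpl. lia.
  - exists b, b', l. do 5 (split; [auto |]). simpl. lia.
Qed.

Definition ear (S : list (V G)) (H : E G -> Prop) c J h :=
  c <> h /\ In c S /\ In h S /\ walk (c :: J ++ [h]) /\ NoDup J /\
  (forall x, In x J -> ~ In x S) /\ (forall t, walk_edge (c :: J ++ [h]) t -> ~ H t).

Lemma ear_rev S H c J h : ear S H c J h -> ear S H h (rev J) c.
Proof.
  intros (H1 & H2 & H3 & H4 & H5 & H6 & H7).
  split; [auto | split; [auto | split; [auto | split; [| split; [| split]]]]].
  - rewrite <- rev_path. apply walk_rev. auto.
  - apply NoDup_rev. auto.
  - intros x Hx. apply H6, in_rev. auto.
  - intros t Ht. apply H7. rewrite <- rev_path, walk_edge_rev in Ht. auto.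
Qed.

Lemma ear_same_set S1 S2 H1 H2 c J h : ear S1 H1 c J h ->
  (forall x, In x S1 <-> In x S2) -> same_set H1 H2 -> ear S2 H2 c J h.
Proof.
  intros (E1 & E2 & E3 & E4 & E5 & E6 & E7) HS HH.
  split; [auto | split; [apply HS; auto | split; [apply HS; auto | do 2 (split; [auto |]); split]]].
  - intros x Hx Hx2. apply (E6 x Hx), HS. auto.
  - intros t Ht Ht2. apply (E7 t Ht), HH. auto.
Qed.

Lemma ear_interior_nonempty S H c J h N : ear S H c J h ->
  (forall t, walk_edge (c :: N ++ [h]) t -> H t) -> N ++ J <> [].
Proof.
  intros (_ & _ & _ & Hw & _ & _ & HJ) HN Hnil.
  apply app_eq_nil in Hnil as [-> ->].
  destruct Hw as [(_ & t & Hc & Hh) _].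
  apply (HJ t); [left | apply HN; left]; auto.
Qed.

Lemma simple_path_to_set (S : list (V G)) c w d : ~ In w S -> In d S ->
  joined_avoiding G (fun y => y = c) w d ->
  exists p h, walk (w :: p ++ [h]) /\ NoDup (w :: p) /\ In h S /\ h <> c /\
    forall x, In x (w :: p) -> ~ In x S.
Proof.
  intros Hw Hd Hjoin.
  destruct (joined_avoiding_walk _ _ _ Hjoin) as (l & Hwl & Hlast & Hav).
  destruct (walk_simplify l w Hwl) as (l' & Hw' & Hnd & Hl' & Hin').
  destruct (walk_first_in S (w :: l')) as ([| w0 p1] & h & p2 & Hp & Hh & Hp1).
  { exists d. split; auto. rewrite <- Hlast, <- Hl'. apply last_In. }
  { simpl in Hp. injection Hp as -> _. tauto. }
  simpl in Hp. injection Hp as -> Hl. subst l'.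
  exists p1, h. split; [| split; [| split; [auto | split; [| auto]]]].
  - change (w0 :: p1 ++ h :: p2) with ((w0 :: p1) ++ h :: p2) in Hw'.
    apply walk_app in Hw'. tauto.
  - change (w0 :: p1 ++ h :: p2) with ((w0 :: p1) ++ h :: p2) in Hnd.
    apply NoDup_app_remove_r in Hnd. auto.
  - intros ->. apply (Hav c); auto. apply Hin'. simpl. rewrite in_app_iff. simpl. auto.
Qed.

Lemma ear_exists (S : list (V G)) (H : E G -> Prop) c d w s :
  (forall x : V G, connected_minus G (fun y => y = x)) ->
  In c S -> In d S -> d <> c -> (forall t, H t -> forall x, ends t x -> In x S) ->
  ends s c -> ends s w -> c <> w -> ~ H s ->
  exists J h, ear S H c J h /\ walk_edge (c :: J ++ [h]) s /\ In w (c :: J ++ [h]).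
Proof.
  intros Hcon Hc Hd Hdc HS Hsc Hsw Hcw Hs.
  assert (Hadj : adj G c w) by (split; eauto).
  destruct (classic (In w S)) as [Hw | Hw].
  - exists [], w. split; [| simpl; auto].
    split; [auto | do 4 (split; [simpl; auto using NoDup_nil |]); split; [intros x [] |]].
    intros t [[H1 H2] | []].
    rewrite (edge_eq_of_ends t s c w Hcw H1 H2 Hsc Hsw). auto.
  - destruct (simple_path_to_set S c w d Hw Hd (Hcon c w d (not_eq_sym Hcw) Hdc))
      as (p & h & Hwp & Hnd & Hh & Hhc & Hout).
    exists (w :: p), h. split; [| simpl; auto].
    split; [auto | do 2 (split; [auto |]); split; [split; auto | do 2 (split; [auto |])]].
    intros t Ht HHt. destruct (walk_edge_interior c (w :: p) h t ltac:(congruence) Ht) as (x & Hx & Htx).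
    apply (Hout x Hx), (HS t HHt x Htx).
Qed.

Lemma ear_toward (S : list (V G)) (H : E G -> Prop) y ya l b :
  (forall x : V G, connected_minus G (fun z => z = x)) ->
  (forall c, exists d, In d S /\ d <> c) ->
  (forall t, H t -> forall x, ends t x -> In x S) ->
  ~ H y -> ends y ya -> walk (b :: l) -> In b S -> last (b :: l) b = ya ->
  exists c J h, ear S H c J h /\
    (walk_edge (c :: J ++ [h]) y \/
     exists w l', In w (c :: J ++ [h]) /\ walk (w :: l') /\ last (w :: l') w = ya /\
       length l' < length l).
Proof.
  intros Hcon Hother HS Hy Hya Hw Hb Hl.
  assert (Hstep : exists c w s, In c S /\ ends s c /\ ends s w /\ c <> w /\ ~ H s /\
    (s = y \/ exists l', walk (w :: l') /\ last (w :: l') w = ya /\ length l' < length l)).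
  { destruct (classic (In ya S)) as [Hin | Hout].
    - destruct (other_end y ya Hya) as (yb & Hyb & Hyb').
      exists ya, yb, y. auto 7.
    - rewrite <- Hl in Hout.
      destruct (walk_exit S l b Hw Hb Hout)
        as (c & w & l' & Hc & Hw' & (Hcw & s & Hsc & Hsw) & Hwl' & Hlast & Hlen).
      exists c, w, s. do 4 (split; [auto |]). split.
      + intros Hs. apply Hw', (HS s Hs w Hsw).
      + right. exists l'. rewrite Hlast. auto. }
  destruct Hstep as (c & w & s & Hc & Hsc & Hsw & Hcw & Hs & Halt).
  destruct (Hother c) as (d & Hd & Hdc).
  destruct (ear_exists S H c d w s Hcon Hc Hd Hdc HS Hsc Hsw Hcw Hs) as (J & h & Hear & HsJ & HwJ).
  exists c, J, h. split; [auto |].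
  destruct Halt as [<- | (l' & Hl')]; [left | right; exists w, l']; auto.
Qed.

End Walks.

Section Thetas.
Context {G : graph}.
Implicit Types (u v c h : V G) (I J : list (V G)).

(* A u-v path is given by its list of interior vertices: I stands for the walk u :: I ++ [v]. *)
Definition path_pair u v I J (s : E G) :=
  walk_edge (u :: I ++ [v]) s \/ walk_edge (u :: J ++ [v]) s.

Lemma path_pair_rev u v I J : same_set (path_pair v u (rev I) (rev J)) (path_pair u v I J).
Proof. intro s. unfold path_pair. rewrite !walk_edge_reverse. reflexivity. Qed.

Lemma path_pair_cycle u v I J : NoDup (u :: v :: I ++ J) ->
  walk (u :: I ++ [v]) -> walk (u :: J ++ [v]) -> I ++ J <> [] ->
  cycle u (I ++ v :: rev J) /\
  same_set (walk_edge (u :: (I ++ v :: rev J) ++ [u])) (path_pair u v I J).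
Proof.
  intros Hnd HwI HwJ Hne.
  assert (Hsplit : u :: (I ++ v :: rev J) ++ [u] = (u :: I) ++ v :: (rev J ++ [u]))
    by (simpl; rewrite <- app_assoc; reflexivity).
  split; [split; [| split] |].
  - clear - Hnd. nodup_solve.
  - rewrite length_app. simpl. rewrite length_rev. destruct I, J; simpl in *; congruence || lia.
  - rewrite Hsplit, walk_app, <- rev_path. split; [| apply walk_rev]; auto.
  - intro s. rewrite Hsplit, (walk_edge_app (u :: I)), <- rev_path, walk_edge_rev. reflexivity.
Qed.

Lemma path_pair_circuit u v I J : NoDup (u :: v :: I ++ J) ->
  walk (u :: I ++ [v]) -> walk (u :: J ++ [v]) -> I ++ J <> [] -> is_circuit G (path_pair u v I J).
Proof.
  intros Hnd HwI HwJ Hne.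
  destruct (path_pair_cycle u v I J Hnd HwI HwJ Hne) as (Hcyc & Hedges).
  exact (is_circuit_same_set _ _ (cycle_circuit u _ Hcyc) Hedges).
Qed.

Definition theta u v I1 I2 I3 :=
  NoDup (u :: v :: I1 ++ I2 ++ I3) /\
  walk (u :: I1 ++ [v]) /\ walk (u :: I2 ++ [v]) /\ walk (u :: I3 ++ [v]) /\
  I1 ++ I2 <> [] /\ I1 ++ I3 <> [] /\ I2 ++ I3 <> [].

Definition theta_vertices u v I1 I2 I3 := u :: v :: I1 ++ I2 ++ I3.

Definition theta_edges u v I1 I2 I3 (s : E G) :=
  walk_edge (u :: I1 ++ [v]) s \/ walk_edge (u :: I2 ++ [v]) s \/ walk_edge (u :: I3 ++ [v]) s.

Lemma theta_circuits u v I1 I2 I3 : theta u v I1 I2 I3 ->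
  is_circuit G (path_pair u v I1 I2) /\ is_circuit G (path_pair u v I1 I3) /\
  is_circuit G (path_pair u v I2 I3).
Proof.
  intros (Hnd & H1 & H2 & H3 & N12 & N13 & N23).
  split; [| split]; apply path_pair_circuit; auto; clear - Hnd; nodup_solve.
Qed.

Lemma theta_triple_of_theta u v I1 I2 I3 :
  theta_triple (path_pair u v I1 I2) (path_pair u v I1 I3) (path_pair u v I2 I3).
Proof. unfold theta_triple, path_pair. split; [| split]; intros s; tauto. Qed.

Lemma theta_swap12 u v I1 I2 I3 : theta u v I1 I2 I3 -> theta u v I2 I1 I3.
Proof.
  intros (Hnd & H1 & H2 & H3 & N12 & N13 & N23).
  split; [clear - Hnd; nodup_solve |]. repeat split; auto using app_neq_nil_comm.
Qed.

Lemma theta_swap23 u v I1 I2 I3 : theta u v I1 I2 I3 -> theta u v I1 I3 I2.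
Proof.
  intros (Hnd & H1 & H2 & H3 & N12 & N13 & N23).
  split; [clear - Hnd; nodup_solve |]. repeat split; auto using app_neq_nil_comm.
Qed.

Lemma theta_rev u v I1 I2 I3 : theta u v I1 I2 I3 -> theta v u (rev I1) (rev I2) (rev I3).
Proof.
  intros (Hnd & Hw1 & Hw2 & Hw3 & N12 & N13 & N23).
  assert (Hrev : forall I J, I ++ J <> [] -> rev I ++ rev J <> []).
  { intros I J HIJ Hnil. apply (f_equal (@length _)) in Hnil. rewrite length_app, !length_rev in Hnil.
    destruct I, J; simpl in *; congruence || lia. }
  split; [clear - Hnd; nodup_solve |].
  repeat split; auto using walk_reverse.
Qed.

Lemma theta_edge_ends u v I1 I2 I3 t x : theta u v I1 I2 I3 ->
  theta_edges u v I1 I2 I3 t -> ends t x -> In x (theta_vertices u v I1 I2 I3).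
Proof.
  intros (_ & Hw1 & Hw2 & Hw3 & _) Ht Hx. unfold theta_vertices.
  destruct Ht as [Ht | [Ht | Ht]];
    [ pose proof (walk_edge_ends_in _ t x Hw1 Ht Hx) as Hin
    | pose proof (walk_edge_ends_in _ t x Hw2 Ht Hx) as Hin
    | pose proof (walk_edge_ends_in _ t x Hw3 Ht Hx) as Hin ];
    simpl in *; rewrite !in_app_iff in *; simpl in *; tauto.
Qed.

Lemma theta_other_vertex u v I1 I2 I3 c : theta u v I1 I2 I3 ->
  exists d, In d (theta_vertices u v I1 I2 I3) /\ d <> c.
Proof.
  intros (Hnd & _). apply NoDup_cons_iff in Hnd as [Hu _].
  destruct (classic (u = c)) as [<- | Hc].
  - exists v. split; [simpl; auto |]. intros ->. apply Hu. simpl. auto.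
  - exists u. simpl. auto.
Qed.

Lemma theta_pair_cycle u v I1 I2 I3 : theta u v I1 I2 I3 ->
  cycle u (I1 ++ v :: rev I3) /\
  same_set (walk_edge (u :: (I1 ++ v :: rev I3) ++ [u])) (path_pair u v I1 I3).
Proof.
  intros (Hnd & Hw1 & _ & Hw3 & _ & N13 & _).
  apply path_pair_cycle; auto. clear - Hnd. nodup_solve.
Qed.

Lemma cycle_ear_theta a t c J h : cycle a t -> ear (a :: t) (walk_edge (a :: t ++ [a])) c J h ->
  exists I1 I2, theta c h I1 I2 J /\ same_set (walk_edge (a :: t ++ [a])) (path_pair c h I1 I2).
Proof.
  intros Hcyc Hear. pose proof Hear as (Hch & Hc & Hh & HwJ & HndJ & HJout & _).
  destruct (cycle_rotate a t c Hcyc Hc) as (t' & (Hnd & Hlen & Hw) & Hedges & Hvert).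
  assert (Hh' : In h t') by (apply Hvert in Hh as [-> | Hh]; [congruence | auto]).
  apply in_split in Hh' as (I1 & I2' & ->).
  rewrite walk_join_iff in Hw. destruct Hw as [Hw1 Hw2].
  exists I1, (rev I2').
  assert (HE : same_set (walk_edge (a :: t ++ [a])) (path_pair c h I1 (rev I2'))).
  { intro s. rewrite (Hedges s), walk_edge_join. unfold path_pair.
    rewrite <- (rev_involutive I2') at 1. rewrite walk_edge_reverse. reflexivity. }
  split; [| exact HE].
  assert (HJd : disjoint J (c :: I1 ++ h :: I2'))
    by (intros x Hx1 Hx2; apply (HJout x Hx1), Hvert; auto).
  split; [clear - Hnd HndJ HJd; nodup_solve |].
  split; [auto | split; [apply walk_reverse; auto | split; [auto | split; [| split]]]].
  - intros Hnil. apply app_eq_nil in Hnil as [-> Hnil].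
    destruct I2'; simpl in Hlen, Hnil; [lia | destruct (rev I2'); discriminate].
  - apply (ear_interior_nonempty _ _ c J h I1 Hear). intros s Hs. apply HE. left. auto.
  - apply (ear_interior_nonempty _ _ c J h (rev I2') Hear). intros s Hs. apply HE. right. auto.
Qed.

Definition theta_circuit u v I1 I2 I3 (O : E G -> Prop) :=
  same_set O (path_pair u v I1 I2) \/ same_set O (path_pair u v I1 I3) \/
  same_set O (path_pair u v I2 I3).

Lemma theta_circuit_swap12 u v I1 I2 I3 O : theta_circuit u v I2 I1 I3 O -> theta_circuit u v I1 I2 I3 O.
Proof.
  intros [H | [H | H]]; [left | right; right | right; left];
    intro s; rewrite (H s); unfold path_pair; tauto.
Qed.

Lemma theta_circuit_swap23 u v I1 I2 I3 O : theta_circuit u v I1 I3 I2 O -> theta_circuit u v I1 I2 I3 O.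
Proof.
  intros [H | [H | H]]; [right; left | left | right; right];
    intro s; rewrite (H s); unfold path_pair; tauto.
Qed.

Lemma theta_circuit_is_circuit u v I1 I2 I3 O : theta u v I1 I2 I3 -> theta_circuit u v I1 I2 I3 O ->
  is_circuit G O.
Proof.
  intros Hth HO. destruct (theta_circuits u v I1 I2 I3 Hth) as (C12 & C13 & C23).
  destruct HO as [H | [H | H]]; (eapply is_circuit_same_set; [| intro s; symmetry; apply H]); auto.
Qed.

(* What [theta_triple_propagate] needs to pass [image f Oi = Z] on to the new circuits. *)
Definition reroutes (O1 O2 O3 : E G -> Prop) c h A B J :=
  theta c h A B J /\ same_set (path_pair c h A B) O1 /\
  exists K, is_circuit G K /\
    theta_triple O1 (path_pair c h A J) (path_pair c h B J) /\
    theta_triple O2 (path_pair c h A J) K /\ theta_triple O3 (path_pair c h B J) K.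

Lemma reroutes_rev O1 O2 O3 c h A B J :
  reroutes O1 O2 O3 h c A B (rev J) -> reroutes O1 O2 O3 c h (rev A) (rev B) J.
Proof.
  intros (Hth & HO1 & K & HK & T1 & T2 & T3).
  apply theta_rev in Hth. rewrite rev_involutive in Hth.
  assert (Hpp : forall I, same_set (path_pair h c I (rev J)) (path_pair c h (rev I) J)).
  { intros I s. rewrite <- (rev_involutive J) at 2. symmetry. apply path_pair_rev. }
  split; [auto | split; [intro s; rewrite (path_pair_rev h c A B s); apply HO1 |]].
  exists K. split; [auto | split; [| split]].
  - exact (theta_triple_same_set _ _ _ _ _ _ (same_set_refl O1) (Hpp A) (Hpp B) T1).
  - exact (theta_triple_same_set _ _ _ _ _ _ (same_set_refl O2) (Hpp A) (same_set_refl K) T2).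
  - exact (theta_triple_same_set _ _ _ _ _ _ (same_set_refl O3) (Hpp B) (same_set_refl K) T3).
Qed.

(* The ear J joins two vertices of the first path. The new paths from c to h are the segment M
   and the detour back to u, along I2 to v and back to h; the detour along I3 closes K. *)
Lemma reroute_same_path u v I1 I2 I3 X c M h Y J :
  theta u v I1 I2 I3 -> u :: I1 ++ [v] = X ++ c :: M ++ h :: Y ->
  ear (theta_vertices u v I1 I2 I3) (theta_edges u v I1 I2 I3) c J h ->
  reroutes (path_pair u v I1 I2) (path_pair u v I1 I3) (path_pair u v I2 I3)
    c h M (rev X ++ I2 ++ rev Y) J.
Proof.
  intros Hth HP Hear.
  pose proof Hth as (Hnd & Hw1 & Hw2 & Hw3 & N12 & _).
  pose proof Hear as (_ & _ & _ & HwJ & HndJ & HJout & _).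
  destruct (walk_reroute u v I1 I2 X c M h Y HP Hw1 Hw2) as (HwN2 & EN2).
  destruct (walk_reroute u v I1 I3 X c M h Y HP Hw1 Hw3) as (HwN3 & EN3).
  pose proof (walk_edge_split3 X c M h Y) as E1. rewrite <- HP in E1.
  rewrite HP in Hw1. apply walk_split3 in Hw1 as (_ & HwM & _).
  set (N2 := rev X ++ I2 ++ rev Y) in *. set (N3 := rev X ++ I3 ++ rev Y) in *.
  assert (HndAll : NoDup ((X ++ c :: M ++ h :: Y) ++ I2 ++ I3 ++ J)).
  { rewrite <- HP. assert (HJd : disjoint J (u :: v :: I1 ++ I2 ++ I3)) by exact HJout.
    clear - Hnd HndJ HJd. nodup_solve. }
  assert (HMN : M ++ N2 <> []).
  { intros Hnil. apply app_eq_nil in Hnil as [-> HN].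
    apply app_eq_nil in HN as [HX HN]. apply app_eq_nil in HN as [HI2 HY].
    apply N12. rewrite HI2, app_nil_r.
    assert (X = []) as -> by (rewrite <- (rev_involutive X), HX; reflexivity).
    assert (Y = []) as -> by (rewrite <- (rev_involutive Y), HY; reflexivity).
    apply (f_equal (@length _)) in HP. simpl in HP. rewrite length_app in HP.
    destruct I1; simpl in HP; [reflexivity | lia]. }
  assert (Hnonempty : forall N,
    (forall t, walk_edge (c :: N ++ [h]) t -> theta_edges u v I1 I2 I3 t) -> N ++ J <> [])
    by (intros N; apply (ear_interior_nonempty _ _ c J h N Hear)).
  assert (HMJ : M ++ J <> []) by (apply Hnonempty; intros t Ht; left; apply E1; auto).
  assert (HN2J : N2 ++ J <> [])
    by (apply Hnonempty; intros t Ht; apply EN2 in Ht; unfold theta_edges; rewrite (E1 t); tauto).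
  assert (HN3J : N3 ++ J <> [])
    by (apply Hnonempty; intros t Ht; apply EN3 in Ht; unfold theta_edges; rewrite (E1 t); tauto).
  split; [| split; [| exists (path_pair c h N3 J); split]].
  - split; [clear - HndAll; subst N2; nodup_solve | auto 7].
  - intro s. unfold path_pair. rewrite (E1 s), (EN2 s). tauto.
  - apply path_pair_circuit; auto. clear - HndAll. subst N3. nodup_solve.
  - unfold theta_triple, path_pair. clear - E1 EN2 EN3. repeat split; intros s;
      specialize (E1 s); specialize (EN2 s); specialize (EN3 s); tauto.
Qed.

(* The ear J joins interior vertices of the first two paths. The new paths from c to h pass
   through u and through v; the path through u, I3 and v closes K. *)
Lemma reroute_cross u v X1 c Y1 X2 h Y2 I3 J :
  theta u v (X1 ++ c :: Y1) (X2 ++ h :: Y2) I3 ->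
  ear (theta_vertices u v (X1 ++ c :: Y1) (X2 ++ h :: Y2) I3)
      (theta_edges u v (X1 ++ c :: Y1) (X2 ++ h :: Y2) I3) c J h ->
  reroutes (path_pair u v (X1 ++ c :: Y1) (X2 ++ h :: Y2)) (path_pair u v (X2 ++ h :: Y2) I3)
    (path_pair u v (X1 ++ c :: Y1) I3) c h (rev X1 ++ u :: X2) (Y1 ++ v :: rev Y2) J.
Proof.
  intros Hth Hear.
  pose proof Hth as (Hnd & Hw1 & Hw2 & Hw3 & _).
  pose proof Hear as (_ & _ & _ & HwJ & HndJ & HJout & _).
  assert (HndAll : NoDup ((u :: v :: (X1 ++ c :: Y1) ++ (X2 ++ h :: Y2) ++ I3) ++ J)).
  { assert (HJd : disjoint J (u :: v :: (X1 ++ c :: Y1) ++ (X2 ++ h :: Y2) ++ I3)) by exact HJout.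
    clear - Hnd HndJ HJd. nodup_solve. }
  apply walk_join_iff in Hw1 as [HwX1 HwY1]. apply walk_join_iff in Hw2 as [HwX2 HwY2].
  set (A := rev X1 ++ u :: X2). set (B := Y1 ++ v :: rev Y2).
  set (C := rev X1 ++ u :: I3 ++ v :: rev Y2).
  assert (HwA : walk (c :: A ++ [h])) by (apply walk_join_iff; split; [apply walk_reverse |]; auto).
  assert (HwB : walk (c :: B ++ [h])) by (apply walk_join_iff; split; [| apply walk_reverse]; auto).
  assert (HwC : walk (c :: C ++ [h])).
  { apply walk_join_iff. split; [apply walk_reverse; auto |].
    apply walk_join_iff. split; [| apply walk_reverse]; auto. }
  assert (Hnil : forall l1 (x : V G) l2 l3, (l1 ++ x :: l2) ++ l3 <> [])
    by (intros l1 x l2 l3 H; apply (f_equal (@length _)) in H;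
        rewrite !length_app in H; simpl in H; lia).
  split; [| split; [| exists (path_pair c h C J); split]].
  - split; [clear - HndAll; subst A B; nodup_solve |]. unfold A, B. auto 7.
  - intro s. unfold path_pair, A, B. rewrite !walk_edge_join, !walk_edge_reverse. tauto.
  - apply path_pair_circuit; auto; [clear - HndAll; subst C; nodup_solve | apply Hnil].
  - unfold theta_triple, path_pair, A, B, C.
    repeat split; intros s; rewrite !walk_edge_join, ?walk_edge_reverse in *; tauto.
Qed.

Lemma ear_theta_swap12 u v I1 I2 I3 c J h :
  ear (theta_vertices u v I1 I2 I3) (theta_edges u v I1 I2 I3) c J h ->
  ear (theta_vertices u v I2 I1 I3) (theta_edges u v I2 I1 I3) c J h.
Proof.
  intros Hear. apply (ear_same_set _ _ _ _ _ _ _ Hear).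
  - intros x. unfold theta_vertices. simpl. rewrite !in_app_iff. tauto.
  - intros t. unfold theta_edges. tauto.
Qed.

Lemma ear_theta_swap23 u v I1 I2 I3 c J h :
  ear (theta_vertices u v I1 I2 I3) (theta_edges u v I1 I2 I3) c J h ->
  ear (theta_vertices u v I1 I3 I2) (theta_edges u v I1 I3 I2) c J h.
Proof.
  intros Hear. apply (ear_same_set _ _ _ _ _ _ _ Hear).
  - intros x. unfold theta_vertices. simpl. rewrite !in_app_iff. tauto.
  - intros t. unfold theta_edges. tauto.
Qed.

Definition ear_reroutable u v I1 I2 I3 c J h :=
  exists A B O1 O2 O3, reroutes O1 O2 O3 c h A B J /\
    theta_circuit u v I1 I2 I3 O1 /\ theta_circuit u v I1 I2 I3 O2 /\ theta_circuit u v I1 I2 I3 O3.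

Lemma ear_reroutable_swap12 u v I1 I2 I3 c J h :
  ear_reroutable u v I2 I1 I3 c J h -> ear_reroutable u v I1 I2 I3 c J h.
Proof.
  intros (A & B & O1 & O2 & O3 & HR & H1 & H2 & H3).
  exists A, B, O1, O2, O3. auto using theta_circuit_swap12.
Qed.

Lemma ear_reroutable_swap23 u v I1 I2 I3 c J h :
  ear_reroutable u v I1 I3 I2 c J h -> ear_reroutable u v I1 I2 I3 c J h.
Proof.
  intros (A & B & O1 & O2 & O3 & HR & H1 & H2 & H3).
  exists A, B, O1, O2, O3. auto using theta_circuit_swap23.
Qed.

Lemma ear_reroutable_base u v I1 I2 I3 c J h : theta u v I1 I2 I3 ->
  ear (theta_vertices u v I1 I2 I3) (theta_edges u v I1 I2 I3) c J h ->
  (In c (u :: I1 ++ [v]) /\ In h (u :: I1 ++ [v])) \/ (In c I1 /\ In h I2) ->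
  ear_reroutable u v I1 I2 I3 c J h.
Proof.
  intros Hth Hear [[Hc Hh] | [Hc Hh]].
  - assert (Hch : c <> h) by apply Hear.
    destruct (in_split_pair _ c h Hc Hh Hch) as [(X & M & Y & HP) | (X & M & Y & HP)].
    + do 5 eexists. split; [apply (reroute_same_path _ _ _ _ _ _ _ _ _ _ _ Hth HP Hear) |].
      unfold theta_circuit. auto 6 using same_set_refl.
    + do 5 eexists.
      split; [apply reroutes_rev, (reroute_same_path _ _ _ _ _ _ _ _ _ _ _ Hth HP), ear_rev, Hear |].
      unfold theta_circuit. auto 6 using same_set_refl.
  - apply in_split in Hc as (X1 & Y1 & ->). apply in_split in Hh as (X2 & Y2 & ->).
    do 5 eexists. split; [apply (reroute_cross _ _ _ _ _ _ _ _ _ _ Hth Hear) |].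
    unfold theta_circuit. auto 6 using same_set_refl.
Qed.

Lemma theta_ear_reroutable u v I1 I2 I3 c J h : theta u v I1 I2 I3 ->
  ear (theta_vertices u v I1 I2 I3) (theta_edges u v I1 I2 I3) c J h ->
  ear_reroutable u v I1 I2 I3 c J h.
Proof.
  intros Hth Hear. pose proof Hear as (Hch & Hc & Hh & _).
  unfold theta_vertices in Hc, Hh. simpl in Hc, Hh. rewrite !in_app_iff in Hc, Hh.
  (* each case is the base case for a suitable ordering of the three paths *)
  destruct Hc as [<- | [<- | [Hc | [Hc | Hc]]]]; destruct Hh as [<- | [<- | [Hh | [Hh | Hh]]]];
    try congruence;
    first
      [ solve [apply ear_reroutable_base; auto; simpl; rewrite ?in_app_iff; simpl; tauto]
      | solve [apply ear_reroutable_swap12, ear_reroutable_base;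
               auto using theta_swap12, ear_theta_swap12; simpl; rewrite ?in_app_iff; simpl; tauto]
      | solve [apply ear_reroutable_swap23, ear_reroutable_base;
               auto using theta_swap23, ear_theta_swap23; simpl; rewrite ?in_app_iff; simpl; tauto]
      | solve [apply ear_reroutable_swap12, ear_reroutable_swap23, ear_reroutable_base;
               auto using theta_swap12, theta_swap23, ear_theta_swap12, ear_theta_swap23;
               simpl; rewrite ?in_app_iff; simpl; tauto]
      | solve [apply ear_reroutable_swap23, ear_reroutable_swap12, ear_reroutable_base;
               auto using theta_swap12, theta_swap23, ear_theta_swap12, ear_theta_swap23;
               simpl; rewrite ?in_app_iff; simpl; tauto]
      | solve [apply ear_reroutable_swap12, ear_reroutable_swap23, ear_reroutable_swap12, ear_reroutable_base;
               auto using theta_swap12, theta_swap23, ear_theta_swap12, ear_theta_swap23;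
               simpl; rewrite ?in_app_iff; simpl; tauto] ].
Qed.

End Thetas.

Section CircuitSurjection.
Variables (G G' : graph) (f : E G -> E G').
Hypothesis f_circuit : forall C, is_circuit G C -> is_circuit G' (image f C).
Hypothesis G_minus_vertex_connected : forall x : V G, connected_minus G (fun y => y = x).

Lemma image_same_set (C D : E G -> Prop) : same_set C D -> same_set (image f C) (image f D).
Proof. intros HCD y. split; intros (x & Hx & <-); exists x; split; auto; apply HCD; auto. Qed.

Lemma image_theta_triple (O K1 K2 : E G -> Prop) :
  theta_triple O K1 K2 -> theta_triple (image f O) (image f K1) (image f K2).
Proof.
  intros (H1 & H2 & H3). split; [| split]; intros y (x & Hx & <-);
    [destruct (H1 x Hx) | destruct (H2 x Hx) | destruct (H3 x Hx)]; [left | right | left | right | left | right];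
    exists x; auto.
Qed.

Definition theta_onto (Z : E G' -> Prop) u v I1 I2 I3 :=
  theta u v I1 I2 I3 /\ forall O, theta_circuit u v I1 I2 I3 O -> same_set (image f O) Z.

Lemma theta_onto_circuit Z u v I1 I2 I3 : theta_onto Z u v I1 I2 I3 -> is_circuit G' Z.
Proof.
  intros (Hth & HZ). destruct (theta_circuits u v I1 I2 I3 Hth) as (C12 & _).
  apply (is_circuit_same_set _ _ (f_circuit _ C12)), HZ. left. apply same_set_refl.
Qed.

Lemma theta_onto_edge Z u v I1 I2 I3 t : theta_onto Z u v I1 I2 I3 ->
  theta_edges u v I1 I2 I3 t -> Z (f t).
Proof.
  intros (_ & HZ) Ht.
  pose proof (HZ (path_pair u v I1 I2) (or_introl (same_set_refl _))) as Z12.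
  pose proof (HZ (path_pair u v I1 I3) (or_intror (or_introl (same_set_refl _)))) as Z13.
  destruct Ht as [Ht | [Ht | Ht]]; [apply Z12 | apply Z12 | apply Z13];
    exists t; unfold path_pair; auto.
Qed.

Lemma theta_onto_reroutes Z (O1 O2 O3 : E G -> Prop) c h A B J :
  is_circuit G O1 -> is_circuit G O2 -> is_circuit G O3 ->
  same_set (image f O1) Z -> same_set (image f O2) Z -> same_set (image f O3) Z ->
  reroutes O1 O2 O3 c h A B J -> theta_onto Z c h A B J.
Proof.
  intros C1 C2 C3 Z1 Z2 Z3 (Hth & HO1 & K & HK & T1 & T2 & T3).
  destruct (theta_circuits c h A B J Hth) as (CAB & CAJ & CBJ).
  destruct (theta_triple_propagate Z (image f O1) (image f O2) (image f O3)
    (image f (path_pair c h A J)) (image f (path_pair c h B J)) (image f K)) as (ZA & ZB & _);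
    auto using image_theta_triple.
  split; [auto |]. intros O [HO | [HO | HO]] z; rewrite (image_same_set _ _ HO z).
  - rewrite (image_same_set _ _ HO1 z). apply Z1.
  - apply ZA.
  - apply ZB.
Qed.

Lemma theta_onto_ear Z u v I1 I2 I3 c J h : theta_onto Z u v I1 I2 I3 ->
  ear (theta_vertices u v I1 I2 I3) (theta_edges u v I1 I2 I3) c J h ->
  exists A B, theta_onto Z c h A B J.
Proof.
  intros (Hth & HZ) Hear.
  destruct (theta_ear_reroutable u v I1 I2 I3 c J h Hth Hear)
    as (A & B & O1 & O2 & O3 & HR & H1 & H2 & H3).
  exists A, B. apply (theta_onto_reroutes Z O1 O2 O3); auto; eapply theta_circuit_is_circuit; eauto.
Qed.

Lemma theta_onto_common_fiber c h I1 I2 I3 x y : theta c h I1 I2 I3 -> f x = f y ->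
  path_pair c h I1 I2 x -> walk_edge (c :: I3 ++ [h]) y ->
  theta_onto (image f (path_pair c h I1 I2)) c h I1 I2 I3.
Proof.
  intros Hth Hxy Hx Hy. destruct (theta_circuits c h I1 I2 I3 Hth) as (C12 & C13 & C23).
  destruct (theta_triple_common (image f (path_pair c h I1 I2)) (image f (path_pair c h I1 I3))
    (image f (path_pair c h I2 I3)) (f y)) as (E13 & E23);
    auto using image_theta_triple, theta_triple_of_theta.
  - exists x. auto.
  - exists y. split; [right |]; auto.
  - exists y. split; [right |]; auto.
  - split; [auto |]. intros O [HO | [HO | HO]] z; rewrite (image_same_set _ _ HO z); [reflexivity | ..];
      symmetry; [apply E13 | apply E23].
Qed.

Lemma theta_onto_covers_from Z z za : ends z za -> forall n u v I1 I2 I3 l b,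
  theta_onto Z u v I1 I2 I3 -> walk (b :: l) -> In b (theta_vertices u v I1 I2 I3) ->
  last (b :: l) b = za -> length l < n -> Z (f z).
Proof.
  intros Hza n. induction n as [| n IH]; intros u v I1 I2 I3 l b Hon Hw Hb Hl Hn; [lia |].
  destruct (classic (theta_edges u v I1 I2 I3 z)) as [Hz | Hz]; [eapply theta_onto_edge; eauto |].
  pose proof Hon as (Hth & _).
  destruct (ear_toward _ _ z za l b G_minus_vertex_connected (fun c => theta_other_vertex u v I1 I2 I3 c Hth)
    (fun t Ht x Hx => theta_edge_ends u v I1 I2 I3 t x Hth Ht Hx) Hz Hza Hw Hb Hl)
    as (c & J & h & Hear & [HzJ | (w & l' & Hw' & Hwl' & Hl' & Hlen)]);
    destruct (theta_onto_ear Z u v I1 I2 I3 c J h Hon Hear) as (A & B & Hon').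
  - apply (theta_onto_edge _ _ _ _ _ _ _ Hon'). right. right. auto.
  - apply (IH c h A B J l' w Hon' Hwl'); [| auto | lia].
    unfold theta_vertices. simpl in Hw' |- *. rewrite !in_app_iff in *. simpl in Hw'. tauto.
Qed.

Lemma theta_onto_covers Z u v I1 I2 I3 z : connected_minus G (fun _ => False) ->
  theta_onto Z u v I1 I2 I3 -> Z (f z).
Proof.
  intros Hconn Hon. destruct (ends_two G z) as (za & zb & _ & Hz).
  destruct (joined_avoiding_walk _ u za (Hconn u za (fun H => H) (fun H => H))) as (l & Hw & Hl & _).
  apply (theta_onto_covers_from Z z za (proj2 (Hz za) (or_introl eq_refl)) (S (length l)) u v I1 I2 I3 l u);
    simpl; auto.
Qed.

Lemma theta_onto_exists_from x y ya : f x = f y -> ends y ya -> forall n a t l b,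
  cycle a t -> walk_edge (a :: t ++ [a]) x -> ~ walk_edge (a :: t ++ [a]) y ->
  walk (b :: l) -> In b (a :: t) -> last (b :: l) b = ya -> length l < n ->
  exists Z u v I1 I2 I3, theta_onto Z u v I1 I2 I3.
Proof.
  intros Hxy Hya n. induction n as [| n IH]; intros a t l b Hcyc Hx Hy Hw Hb Hl Hn; [lia |].
  destruct (ear_toward _ _ y ya l b G_minus_vertex_connected (fun c => cycle_other_vertex a t c Hcyc)
    (fun s Hs x Hx => cycle_edge_ends a t s x Hcyc Hs Hx) Hy Hya Hw Hb Hl) as (c & J & h & Hear & Hnext).
  destruct (cycle_ear_theta a t c J h Hcyc Hear) as (I1 & I2 & Hth & HE).
  destruct (classic (walk_edge (c :: J ++ [h]) y)) as [HyJ | HyJ].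
  { exists (image f (path_pair c h I1 I2)), c, h, I1, I2, J.
    apply (theta_onto_common_fiber _ _ _ _ _ x y); auto. apply HE. auto. }
  destruct Hnext as [? | (w & l' & Hw' & Hwl' & Hl' & Hlen)]; [contradiction |].
  (* continue with the cycle formed by the ear and the side of the old cycle carrying x *)
  assert (Hrec : forall K1 K2, theta c h K1 K2 J -> walk_edge (c :: K1 ++ [h]) x ->
    ~ walk_edge (c :: K1 ++ [h]) y -> exists Z u v I1 I2 I3, theta_onto Z u v I1 I2 I3).
  { intros K1 K2 Hth' HxK HyK. destruct (theta_pair_cycle c h K1 K2 J Hth') as (Hcyc' & HE').
    apply (IH c (K1 ++ h :: rev J) l' w Hcyc'); [apply HE'; left; auto | | auto | | auto | lia].
    - intros Hy'. apply HE' in Hy' as [? | ?]; contradiction.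
    - simpl in Hw' |- *. rewrite !in_app_iff in *. simpl in Hw' |- *. rewrite <- in_rev. tauto. }
  apply HE in Hx as [Hx | Hx]; [apply (Hrec I1 I2) | apply (Hrec I2 I1)]; auto using theta_swap12;
    intros Hy'; apply Hy, HE; [left | right]; auto.
Qed.

Lemma theta_onto_exists (C : E G -> Prop) x y : connected_minus G (fun _ => False) ->
  is_circuit G C -> C x -> ~ C y -> f x = f y -> exists Z u v I1 I2 I3, theta_onto Z u v I1 I2 I3.
Proof.
  intros Hconn HC Cx Cy Hxy. destruct (circuit_cycle C HC) as (a & t & Hcyc & HCe).
  destruct (ends_two G y) as (ya & yb & _ & Hy).
  destruct (joined_avoiding_walk _ a ya (Hconn a ya (fun H => H) (fun H => H))) as (l & Hw & Hl & _).
  apply (theta_onto_exists_from x y ya Hxy (proj2 (Hy ya) (or_introl eq_refl)) (S (length l)) a t l a Hcyc);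
    simpl; auto.
  - apply HCe. auto.
  - intros Hy'. apply Cy, HCe, Hy'.
Qed.

End CircuitSurjection.

Theorem lemma1p1 (G G' : graph) (f : E G -> E G')
  (hG : two_connected G) (hG' : ~ graph_is_circuit G')
  (hf : circuit_surjection G G' f)
  (e : E G') (C : E G -> Prop) (hC : is_circuit G C)
  (hmeet : exists x, C x /\ f x = e) :
  forall x, f x = e -> C x.
Proof.
  intros y Hy. apply NNPP. intros Cy.
  destruct hG as (_ & Hconn & Hconn1), hf as (Hsurj & Hcirc & _), hmeet as (x & Cx & Hx).
  destruct (theta_onto_exists G G' f Hcirc Hconn1 C x y Hconn hC Cx Cy ltac:(congruence))
    as (Z & u & v & I1 & I2 & I3 & Hon).
  apply hG'. apply (is_circuit_same_set Z); [exact (theta_onto_circuit G G' f Hcirc _ _ _ _ _ _ Hon) |].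
  intros g. split; [auto | intros _].
  destruct (Hsurj g) as (z & <-).
  exact (theta_onto_covers G G' f Hcirc Hconn1 Z u v I1 I2 I3 z Hconn Hon).
Qed.
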